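(* Let $I,J,J'\in\mathcal I$ be such that $J\vartriangleleft I$, $J'\vartriangleleft I$, and $J\neq J'$. Then at least one of the following holds: $J'\vartriangleleft J$; $J\vartriangleleft J'$; or there is $J''\in\mathcal I$ with $J''\vartriangleleft J$ and $J''\vartriangleleft J'$.
   Context: Let $(a_i)_{i=1,\dots,n}$ be a sequence of distinct integers between $1$ and $n$, and set $a_0=0$; write $A=(a_i)_{i=0,1,\dots,n}$. A set $I\subseteq\{0\}\cup[n]$ is feasible if $a_i<a_j$ for all $i,j\in I$ with $i<j$; $\mathcal I$ denotes the family of feasible sets of maximum cardinality. Patience sorting: start with empty piles $P_0,\dots,P_n$; for $i=0,1,\dots,n$ in order, put $a_i$ on top of the pile $P_j$ with smallest index $j$ such that $P_j$ is empty or the top element of $P_j$ is greater than $a_i$. Let $P_0,\dots,P_k$ be the resulting nonempty piles. Say $a_u$ is placed below $a_v$ on a pile if both lie on the same pile and $a_u$ was put there before $a_v$. For $I,J\in\mathcal I$, write $I\vartriangleleft J$ if $I\setminus J=\{u\}$ and $J\setminus I=\{v\}$ for some $u,v$ such that $a_u$ is placed strictly below $a_v$ on pile $P_i$ for some $1\le i\le k$. *)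

From mathcomp Require Import all_boot all_order.
Set Implicit Arguments. Unset Strict Implicit. Unset Printing Implicit Defensive.

(* The sequence A = (a_0, a_1, ..., a_n) is given as a : nat -> nat;
   only the values a 0, ..., a n matter. Indices are elements of 'I_n.+1. *)

Definition valid_seq (n : nat) (a : nat -> nat) : Prop :=
  a 0 = 0 /\
  (forall i, 1 <= i <= n -> 1 <= a i <= n) /\
  (forall i j, 1 <= i <= n -> 1 <= j <= n -> a i = a j -> i = j).

Definition feasible (n : nat) (a : nat -> nat) (I : {set 'I_n.+1}) : Prop :=
  forall i j : 'I_n.+1, i \in I -> j \in I -> (i < j)%N -> a i < a j.

Definition max_feasible (n : nat) (a : nat -> nat) (I : {set 'I_n.+1}) : Prop :=
  feasible a I /\ forall K : {set 'I_n.+1}, feasible a K -> #|K| <= #|I|.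

(* Patience sorting.  The state is the sequence of tops of the piles
   P_0, P_1, ... (index j = pile P_j). *)
Definition pile_choice (tops : seq nat) (x : nat) : nat :=
  find (fun t => x < t) tops.

Definition ps_step (a : nat -> nat) (tops : seq nat) (i : nat) : seq nat :=
  set_nth 0 tops (pile_choice tops (a i)) (a i).

Definition tops_after (a : nat -> nat) (k : nat) : seq nat :=
  foldl (ps_step a) [::] (iota 0 k).

Definition pile (a : nat -> nat) (i : nat) : nat :=
  pile_choice (tops_after a i) (a i).

(* a_u is placed strictly below a_v on the same pile P_p (elements are put
   in the order of their indices) *)
Definition placed_below (a : nat -> nat) (u v : nat) : Prop :=
  pile a u = pile a v /\ u < v.

Definition tri (n : nat) (a : nat -> nat) (I J : {set 'I_n.+1}) : Prop :=
  exists u v : 'I_n.+1,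
    I :\: J = [set u] /\ J :\: I = [set v] /\
    1 <= pile a u /\ placed_below a u v.

From mathcomp Require Import all_boot all_order.
From mathcomp Require Import zify.

(* Patience sorting keeps the pile tops nondecreasing from left to right, and a
   pile only receives values smaller than its top.  Hence an element lands
   strictly to the right of every earlier smaller element, and values decrease
   up each pile: the members of a feasible set sit on distinct piles, ordered
   alike by index, by value and by pile.
   Write J = I - v + u and J' = I - v' + u' with u below v and u' below v'.
   If pile u < pile u', then v <> v' and J'' = I - v - v' + u + u' is feasible,
   since each of its pairs lies in J or in J' except (u, u'), and u < v < u',
   a_u < a_v' < a_u'; it has the size of I, and J'' ◁ J, J'' ◁ J'.  If u and u'
   share a pile then v = v', so J and J' differ by exchanging u and u', and the
   lower of the two gives J ◁ J' or J' ◁ J. *)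

Set Implicit Arguments.
Unset Strict Implicit.
Unset Printing Implicit Defensive.

Lemma nth_lt_pile_choice s x i : i < pile_choice s x -> nth 0 s i <= x.
Proof. by move/(before_find 0)/negbT; rewrite -leqNgt. Qed.

Lemma lt_nth_pile_choice s x :
  pile_choice s x < size s -> x < nth 0 s (pile_choice s x).
Proof.
by move=> ps; apply: (nth_find 0 (a := fun t => x < t)); rewrite has_find.
Qed.

Section PatienceSorting.

Variable a : nat -> nat.

Lemma tops_afterS k : tops_after a k.+1 = ps_step a (tops_after a k) k.
Proof. by rewrite /tops_after -addn1 iotaD foldl_cat add0n. Qed.

Lemma tops_after_nondecreasing k i j :
  i <= j -> j < size (tops_after a k) ->
  nth 0 (tops_after a k) i <= nth 0 (tops_after a k) j.
Proof.
elim: k i j => [|k IHk] i j //; rewrite tops_afterS /ps_step.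
set s := tops_after a k in IHk *; set p := pile_choice s (a k).
have p_le_size : p <= size s := find_size _ _.
rewrite size_set_nth !nth_set_nth /=.
case: (eqVneq i p) => [->|ip]; case: (eqVneq j p) => [->|jp] // ij j_lt.
- have j_lt_s : j < size s by lia.
  have p_lt : p < size s by lia.
  have := IHk p j ij j_lt_s; have : a k < nth 0 s p := lt_nth_pile_choice p_lt.
  lia.
- by apply: nth_lt_pile_choice; lia.
- by apply: IHk; lia.
Qed.

Lemma pile_top_le k x :
  x < k -> pile a x < size (tops_after a k) /\
           nth 0 (tops_after a k) (pile a x) <= a x.
Proof.
elim: k => [|k IHk] //; rewrite ltnS leq_eqVlt tops_afterS /ps_step.
set s := tops_after a k in IHk *; set p := pile_choice s (a k).
rewrite size_set_nth nth_set_nth /=.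
case/orP=> [/eqP ->|x_lt].
  by rewrite [pile a k]/pile -/s -/p eqxx; split=> //; lia.
have [pile_lt top_le] := IHk x_lt; split; first lia.
case: eqP => [same|_] //.
rewrite same in pile_lt top_le.
exact: ltnW (leq_trans (lt_nth_pile_choice pile_lt) top_le).
Qed.

Lemma same_pile_gt u v : u < v -> pile a u = pile a v -> a v < a u.
Proof.
move=> uv same; have [pile_lt top_le] := pile_top_le uv.
rewrite same in pile_lt top_le.
exact: leq_trans (lt_nth_pile_choice pile_lt) top_le.
Qed.

Lemma increasing_pile_lt x y : x < y -> a x < a y -> pile a x < pile a y.
Proof.
move=> xy axy; have [pile_lt top_le] := pile_top_le xy.
rewrite ltnNge; apply/negP => yx.
have pile_y_lt : pile a y < size (tops_after a y) := leq_ltn_trans yx pile_lt.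
have : a y < nth 0 (tops_after a y) (pile a y) := lt_nth_pile_choice pile_y_lt.
have := tops_after_nondecreasing yx pile_lt.
lia.
Qed.

End PatienceSorting.

Section ExchangeSets.

Variable T : finType.
Implicit Types (K L : {set T}) (x y : T).

Lemma setD_exchange K x y :
  x \notin K -> y \in K ->
  (x |: (K :\ y)) :\: K = [set x] /\ K :\: (x |: (K :\ y)) = [set y].
Proof.
move=> xK yK; have xy : x != y by apply: contraNneq xK => ->.
split; apply/setP=> z; rewrite !inE.
- have [->|_] := eqVneq z x; first by rewrite xK.
  by case: (z \in K); rewrite ?andbF.
- have [->|_] := eqVneq z y; first by rewrite yK eq_sym (negbTE xy).
  by case: (z \in K); rewrite ?andbT ?orbT ?andbF.
Qed.

Lemma exchange_of_setD K L x y :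
  K :\: L = [set x] -> L :\: K = [set y] ->
  [/\ K = x |: (L :\ y), x \notin L & y \in L].
Proof.
move=> /setP KL /setP LK.
have := KL x; have := LK y; rewrite !inE !eqxx => /andP[yK yL] /andP[xL xK].
split=> //; apply/setP => z; have := KL z; have := LK z; rewrite !inE.
by case: (z \in K); case: (z \in L); case: (z == x); case: (z == y).
Qed.

Lemma cards_exchange K x y : x \notin K -> y \in K -> #|x |: (K :\ y)| = #|K|.
Proof.
move=> xK yK; rewrite cardsU1 [#|K|](cardsD1 y) yK !inE.
by rewrite (negbTE xK) andbF.
Qed.

Lemma exchangeC K x y x' y' :
  x != y' -> x' != y ->
  x' |: ((x |: (K :\ y)) :\ y') = x |: ((x' |: (K :\ y')) :\ y).
Proof.
move=> xy' x'y; apply/setP => z; rewrite !inE.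
have [->|_] := eqVneq z x; first by rewrite xy' orbT.
have [->|_] := eqVneq z x'; first by rewrite x'y orbT.
by rewrite /= andbCA.
Qed.

End ExchangeSets.

Section Feasible.

Variables (n : nat) (a : nat -> nat).
Implicit Types (K L : {set 'I_n.+1}) (x y : 'I_n.+1).

Lemma feasibleS K L : K \subset L -> feasible a L -> feasible a K.
Proof. by move=> /subsetP KL FL x y /KL xL /KL yL; apply: FL. Qed.

Lemma feasible_pile_lt K x y :
  feasible a K -> x \in K -> y \in K -> pile a x < pile a y ->
  x < y /\ a x < a y.
Proof.
move=> FK xK yK pxy; case: (ltngtP x y) => [xy|yx|/val_inj exy].
- by split; last exact: FK.
- by have := increasing_pile_lt yx (FK _ _ yK xK yx); lia.
- by rewrite exy ltnn in pxy.
Qed.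

Lemma feasible_pile_inj K x y :
  feasible a K -> x \in K -> y \in K -> pile a x = pile a y -> x = y.
Proof.
move=> FK xK yK pxy; case: (ltngtP x y) => [xy|yx|/val_inj //].
- by have := increasing_pile_lt xy (FK _ _ xK yK xy); lia.
- by have := increasing_pile_lt yx (FK _ _ yK xK yx); lia.
Qed.

Lemma feasible_setU1I K L x y :
  feasible a K -> feasible a L -> x < y -> a x < a y ->
  feasible a ((y |: K) :&: (x |: L)).
Proof.
move=> FK FL xy axy i j; rewrite !inE => /andP[iK iL] /andP[jK jL] ij.
have gtF (p q : 'I_n.+1) : p < q -> (q == p) = false.
  by move=> pq; apply/eqP=> qp; rewrite qp ltnn in pq.
have [iy|/negbTE iy] := eqVneq i y.
  subst i; rewrite gtF // in iL; rewrite gtF ?(ltn_trans xy) // in jL.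
  exact: FL.
have [jy|/negbTE jy] := eqVneq j y; last by rewrite iy jy in iK jK; apply: FK.
subst j; have [->|ix] := eqVneq i x; first exact: axy.
by rewrite (negbTE ix) in iL; rewrite gtF // in jL; apply: FL.
Qed.

Lemma max_feasible_card K L :
  max_feasible a K -> feasible a L -> #|L| = #|K| -> max_feasible a L.
Proof. by move=> [_ maxK] FL LK; split=> // M /maxK; rewrite LK. Qed.

Lemma tri_exchange K u v :
  u \notin K -> v \in K -> 1 <= pile a u -> placed_below a u v ->
  tri a (u |: (K :\ v)) K.
Proof.
by move=> uK vK pu uv; have [? ?] := setD_exchange uK vK; exists u, v.
Qed.

Lemma tri_exchange_inv K L :
  tri a K L -> exists u v, [/\ K = u |: (L :\ v), u \notin L, v \in L,
                             1 <= pile a u & placed_below a u v].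
Proof.
move=> [u [v [KL [LK [pu uv]]]]].
by have [? ? ?] := exchange_of_setD KL LK; exists u, v.
Qed.

End Feasible.

Section TwoExchanges.

Variables (n : nat) (a : nat -> nat) (I : {set 'I_n.+1}) (u v u' v' : 'I_n.+1).
Let J := u |: (I :\ v).
Let J' := u' |: (I :\ v').
Hypotheses (maxI : max_feasible a I) (FJ : feasible a J) (FJ' : feasible a J').
Hypotheses (uI : u \notin I) (vI : v \in I).
Hypotheses (u'I : u' \notin I) (v'I : v' \in I).
Hypotheses (pu : 1 <= pile a u) (below_uv : placed_below a u v).
Hypotheses (pu' : 1 <= pile a u') (below_u'v' : placed_below a u' v').

Lemma exchange_piles_lt :
  pile a u < pile a u' ->
  exists J'', [/\ max_feasible a J'', tri a J'' J & tri a J'' J'].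
Proof.
move: below_uv below_u'v' => [puv uv] [pu'v' u'v'] lt.
have vv' : v != v' by apply: contraTneq lt => vv'; rewrite puv pu'v' vv' ltnn.
have uu' : u != u' by apply: contraTneq lt => ->; rewrite ltnn.
have uv' : u != v' by apply: contraNneq uI => ->.
have u'v : u' != v by apply: contraNneq u'I => ->.
have u'J : u' \notin J by rewrite !inE negb_or eq_sym uu' negb_and u'I orbT.
have v'J : v' \in J by rewrite !inE [v' == v]eq_sym vv' v'I orbT.
have uJ' : u \notin J' by rewrite !inE negb_or uu' negb_and uI orbT.
have vJ' : v \in J' by rewrite !inE vv' vI orbT.
have [vu' _] : v < u' /\ a v < a u'.
  by apply: (feasible_pile_lt FJ' vJ' (setU11 _ _)); rewrite -puv.
have [_ auv'] : u < v' /\ a u < a v'.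
  by apply: (feasible_pile_lt FJ (setU11 _ _) v'J); rewrite -pu'v'.
have u_lt_u' : u < u' := ltn_trans uv vu'.
have au_lt_au' : a u < a u' := ltn_trans auv' (same_pile_gt u'v' pu'v').
have J''E : u' |: (J :\ v') = u |: (J' :\ v) by rewrite /J /J' exchangeC.
exists (u' |: (J :\ v')); split.
- have FJ'' : feasible a (u' |: (J :\ v')).
    apply: feasibleS (feasible_setU1I FJ FJ' u_lt_u' au_lt_au').
    by rewrite subsetI {2}J''E !setUS ?subD1set.
  apply: (max_feasible_card maxI FJ'').
  by rewrite (cards_exchange u'J v'J) /J cards_exchange.
- exact: tri_exchange.
- by rewrite J''E; apply: tri_exchange.
Qed.

Lemma exchange_same_pile :
  pile a u = pile a u' -> J <> J' -> tri a J' J \/ tri a J J'.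
Proof.
move: below_uv below_u'v' => [puv _] [pu'v' _] same JJ'.
have vv' : v = v'.
  by apply: (feasible_pile_inj maxI.1 vI v'I); rewrite -puv -pu'v'.
have uu' : u != u' by apply/eqP => uu'; apply: JJ'; rewrite /J /J' uu' vv'.
have u'J : u' \notin J by rewrite !inE negb_or eq_sym uu' negb_and u'I orbT.
have uJ' : u \notin J' by rewrite !inE negb_or uu' negb_and uI orbT.
have JE : J = u |: (J' :\ u').
  by rewrite /J /J' setU1K ?vv' // !inE negb_and u'I orbT.
have J'E : J' = u' |: (J :\ u).
  by rewrite /J /J' setU1K ?vv' // !inE negb_and uI orbT.
case: (ltngtP u u') => [lt|gt|/val_inj eq]; last by rewrite eq eqxx in uu'.
- by right; rewrite {1}JE; apply: tri_exchange; rewrite ?setU11.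
- by left; rewrite {1}J'E; apply: tri_exchange; rewrite ?setU11.
Qed.

End TwoExchanges.

Theorem lemma1 (n : nat) (a : nat -> nat) (I J J' : {set 'I_n.+1}) :
  valid_seq n a ->
  max_feasible a I -> max_feasible a J -> max_feasible a J' ->
  tri a J I -> tri a J' I -> J <> J' ->
  tri a J' J \/ tri a J J' \/
  (exists J'' : {set 'I_n.+1},
     max_feasible a J'' /\ tri a J'' J /\ tri a J'' J').
Proof.
move=> _ maxI [FJ _] [FJ' _] /tri_exchange_inv[u [v [eJ uI vI pu below]]]
  /tri_exchange_inv[u' [v' [eJ' u'I v'I pu' below']]] JJ'.
subst J J'.
case: (ltngtP (pile a u) (pile a u')) => [lt|gt|same].
- right; right.
  have [J'' [maxJ'' tri_J tri_J']] :=
    exchange_piles_lt maxI FJ FJ' uI vI u'I v'I pu below pu' below' lt.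
  by exists J''.
- right; right.
  have [J'' [maxJ'' tri_J' tri_J]] :=
    exchange_piles_lt maxI FJ' FJ u'I v'I uI vI pu' below' pu below gt.
  by exists J''.
- have [tri_J'J|tri_JJ'] :=
    exchange_same_pile maxI uI vI u'I v'I pu below pu' below' same JJ'.
  + by left.
  + by right; left.
Qed.
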